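(* Let $E$ be a graph with finitely many vertices and $K$ a field of characteristic $0$. Assume $E$ contains a sink $w$ and an edge $f$ with $r(f)=w$. Then $1+2f^*$ and $1+2f$ are units of $L_K(E)$ and $\langle 1+2f^*,\,1+2f\rangle$ is a non-cyclic free subgroup of $L_K(E)^\times$.
   Context: A graph $E=(E^0,E^1,r,s)$; the Leavitt path algebra $L_K(E)$ is the free associative $K$-algebra generated by $E^0\cup E^1\cup\{e^*:e\in E^1\}$ subject to: $vv'=\delta_{v,v'}v$; $s(e)e=er(e)=e$; $r(e)e^*=e^*s(e)=e^*$; $e^*f=\delta_{e,f}r(e)$; $v=\sum_{s(e)=v}ee^*$ for every vertex $v$ emitting a finite nonzero number of edges. With $E^0$ finite, $L_K(E)$ is unital with $1=\sum_{v\in E^0}v$. A sink is a vertex emitting no edges. *)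

From HB Require Import structures.
From mathcomp Require Import all_boot all_algebra.
Set Implicit Arguments. Unset Strict Implicit. Unset Printing Implicit Defensive.
Import GRing.Theory.
Local Open Scope ring_scope.

(* A "Leavitt E-family" in a (unital, associative)
   K-algebra B consists of images P v (vertices), X e (edges), Y e (ghost
   edges e^* ) satisfying the defining relations of L_K(E); since E0 is
   finite, L_K(E) is unital with 1 = sum_v v, so we include that relation. *)
Definition is_leavitt_family (K : fieldType) (E0 : finType) (E1 : eqType)
    (s r : E1 -> E0) (B : algType K)
    (P : E0 -> B) (X Y : E1 -> B) : Prop :=
  [/\ (forall v v', P v * P v' = if v == v' then P v else 0),
      (forall e, (P (s e) * X e = X e /\ X e * P (r e) = X e)
              /\ (P (r e) * Y e = Y e /\ Y e * P (s e) = Y e)),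
      (forall e f, Y e * X f = if e == f then P (r e) else 0),
      (forall (v : E0) (es : seq E1), uniq es -> es != [::] ->
          (forall e, (s e == v) = (e \in es)) ->
          P v = \sum_(e <- es) X e * Y e)
    & \sum_(v : E0) P v = 1 ].

Definition alg_hom (K : fieldType) (A B : algType K) (phi : A -> B) : Prop :=
  [/\ (forall a b, phi (a + b) = phi a + phi b),
      (forall a b, phi (a * b) = phi a * phi b),
      (forall (k : K) a, phi (k *: a) = k *: phi a)
    & phi 1 = 1 ].

Definition is_leavitt_path_algebra (K : fieldType) (E0 : finType) (E1 : eqType)
    (s r : E1 -> E0) (A : algType K) (P : E0 -> A) (X Y : E1 -> A) : Prop :=
  is_leavitt_family s r P X Y /\
  forall (B : algType K) (PB : E0 -> B) (XB YB : E1 -> B),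
    is_leavitt_family s r PB XB YB ->
    exists phi : A -> B,
      [/\ alg_hom phi,
          (forall v, phi (P v) = PB v),
          (forall e, phi (X e) = XB e),
          (forall e, phi (Y e) = YB e)
        & forall psi : A -> B, alg_hom psi ->
            (forall v, psi (P v) = PB v) ->
            (forall e, psi (X e) = XB e) ->
            (forall e, psi (Y e) = YB e) ->
            psi =1 phi].

Definition is_unit (R : pzRingType) (x : R) : Prop :=
  exists u : R, x * u = 1 /\ u * x = 1.

(* Words in two letters and their inverses: a letter (g, i) is generator
   g (false = first, true = second), inverted iff i. *)
Fixpoint eval_word (R : pzRingType) (x xi y yi : R) (w : seq (bool * bool)) : R :=
  match w with
  | [::] => 1
  | (g, i) :: w' =>
      (if g then (if i then yi else y) else (if i then xi else x))
        * eval_word x xi y yi w'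
  end.

Fixpoint reduced_word (w : seq (bool * bool)) : bool :=
  match w with
  | a :: ((b :: _) as w') => ~~ ((a.1 == b.1) && (a.2 != b.2)) && reduced_word w'
  | _ => true
  end.

Definition free_pair (R : pzRingType) (x y : R) : Prop :=
  exists xi yi : R,
    [/\ x * xi = 1 /\ xi * x = 1, y * yi = 1 /\ yi * y = 1
      & forall w : seq (bool * bool), w != [::] -> reduced_word w ->
          eval_word x xi y yi w != 1].

From HB Require Import structures.
From mathcomp Require Import all_boot all_algebra.
From mathcomp Require Import boolp zify.
Set Implicit Arguments. Unset Strict Implicit. Unset Printing Implicit Defensive.
Import GRing.Theory.
Local Open Scope ring_scope.

(* Write a = f, b = f^* and p = w.  Since f is not a loop, a^2 = b^2 = 0, so
   1 + 2b and 1 + 2a are units with inverses 1 - 2b and 1 - 2a.  Moreover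
   b a = p, b p = 0, a a = 0 and a p = a, so left multiplication by 1 + 2b
   and 1 + 2a preserves Z a + Z p and acts there by the Sanov matrices
   [[1,0],[2,1]] and [[1,2],[0,1]], which freely generate a free group by the
   ping-pong lemma: a nonempty reduced word moves (1,0) or (0,1).  Because
   char K = 0 and p <> 0, the map Z^2 -> L_K(E), (x,y) |-> x a + y p, is
   injective, so such a word cannot evaluate to 1.  Finally p <> 0 because
   L_K(E) maps to the algebra of linear operators on K^(paths ending at the
   sink w), where w acts as a nonzero projection. *)

Record linop (R : comNzRingType) (T : Type) (t0 : T) := LinOp {
  linop_fun :> (T -> R) -> T -> R;
  linopD : forall g h,
    linop_fun (fun t => g t + h t) = (fun t => linop_fun g t + linop_fun h t);
  linopZ : forall k g,
    linop_fun (fun t => k * g t) = (fun t => k * linop_fun g t) }.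

Section LinearOperators.
Variables (R : comNzRingType) (T : Type) (t0 : T).
Local Notation L := (@linop R T t0).
Implicit Types (m : L) (g : T -> R).

Lemma linopP m1 m2 : (forall g t, m1 g t = m2 g t) -> m1 = m2.
Proof.
case: m1 m2 => [a1 d1 z1] [a2 d2 z2] /= eq12.
have ea : a1 = a2 by apply/funext => g; apply/funext; apply: eq12.
by subst a2; congr LinOp; apply: Prop_irrelevance.
Qed.

HB.instance Definition _ := gen_eqMixin L.
HB.instance Definition _ := gen_choiceMixin L.

Program Definition linop0 : L := @LinOp R T t0 (fun g t => 0) _ _.
Next Obligation. by apply/funext => t; rewrite addr0. Qed.
Next Obligation. by apply/funext => t; rewrite mulr0. Qed.

Program Definition linop_add m1 m2 : L :=
  @LinOp R T t0 (fun g t => m1 g t + m2 g t) _ _.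
Next Obligation. by apply/funext => t; rewrite !linopD addrACA. Qed.
Next Obligation. by apply/funext => t; rewrite !linopZ mulrDr. Qed.

Program Definition linop_opp m : L := @LinOp R T t0 (fun g t => - m g t) _ _.
Next Obligation. by apply/funext => t; rewrite linopD opprD. Qed.
Next Obligation. by apply/funext => t; rewrite linopZ mulrN. Qed.

Lemma linop_addA : associative linop_add.
Proof. by move=> ? ? ?; apply: linopP => g t /=; rewrite addrA. Qed.
Lemma linop_addC : commutative linop_add.
Proof. by move=> ? ?; apply: linopP => g t /=; rewrite addrC. Qed.
Lemma linop_add0 : left_id linop0 linop_add.
Proof. by move=> ?; apply: linopP => g t /=; rewrite add0r. Qed.
Lemma linop_addN : left_inverse linop0 linop_opp linop_add.
Proof. by move=> ?; apply: linopP => g t /=; rewrite addNr. Qed.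

HB.instance Definition _ :=
  GRing.isZmodule.Build L linop_addA linop_addC linop_add0 linop_addN.

Program Definition linop1 : L := @LinOp R T t0 id _ _.
Program Definition linop_comp m1 m2 : L := @LinOp R T t0 (fun g => m1 (m2 g)) _ _.
Next Obligation. by rewrite !linopD. Qed.
Next Obligation. by rewrite !linopZ. Qed.

Lemma linop_compA : associative linop_comp.
Proof. by move=> ? ? ?; apply: linopP. Qed.
Lemma linop_comp1 : left_id linop1 linop_comp.
Proof. by move=> ?; apply: linopP. Qed.
Lemma linop_compr1 : right_id linop1 linop_comp.
Proof. by move=> ?; apply: linopP. Qed.
Lemma linop_compDl : left_distributive linop_comp +%R.
Proof. by move=> ? ? ?; apply: linopP. Qed.
Lemma linop_compDr : right_distributive linop_comp +%R.
Proof. by move=> ? ? ?; apply: linopP => g t /=; rewrite linopD. Qed.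
Lemma linop1_neq0 : linop1 != 0.
Proof.
by apply/eqP => /(congr1 (fun m : L => m (fun=> 1) t0)) /eqP; rewrite oner_eq0.
Qed.

HB.instance Definition _ := GRing.Zmodule_isNzRing.Build L
  linop_compA linop_comp1 linop_compr1 linop_compDl linop_compDr linop1_neq0.

Program Definition linop_scale (k : R) m : L :=
  @LinOp R T t0 (fun g t => k * m g t) _ _.
Next Obligation. by apply/funext => t; rewrite linopD mulrDr. Qed.
Next Obligation. by apply/funext => t; rewrite linopZ mulrCA. Qed.

Lemma linop_scaleA a b m : linop_scale a (linop_scale b m) = linop_scale (a * b) m.
Proof. by apply: linopP => g t /=; rewrite mulrA. Qed.
Lemma linop_scale1 : left_id 1 linop_scale.
Proof. by move=> ?; apply: linopP => g t /=; rewrite mul1r. Qed.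
Lemma linop_scaleDr : right_distributive linop_scale +%R.
Proof. by move=> ? ? ?; apply: linopP => g t /=; rewrite mulrDr. Qed.
Lemma linop_scaleDl m : {morph linop_scale^~ m : a b / a + b}.
Proof. by move=> ? ?; apply: linopP => g t /=; rewrite mulrDl. Qed.

HB.instance Definition _ := GRing.Zmodule_isLmodule.Build R L
  linop_scaleA linop_scale1 linop_scaleDr linop_scaleDl.

Lemma linop_scaleAl (a : R) m1 m2 : a *: (m1 * m2) = (a *: m1) * m2.
Proof. by apply: linopP. Qed.
HB.instance Definition _ := GRing.Lmodule_isLalgebra.Build R L linop_scaleAl.

Lemma linop_scaleAr (a : R) m1 m2 : a *: (m1 * m2) = m1 * (a *: m2).
Proof. by apply: linopP => g t /=; rewrite linopZ. Qed.
HB.instance Definition _ := GRing.Lalgebra_isAlgebra.Build R L linop_scaleAr.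

Lemma linop_sumE (I : Type) (rs : seq I) (p : pred I) (F : I -> L) g t :
  (\sum_(i <- rs | p i) F i) g t = \sum_(i <- rs | p i) F i g t.
Proof. by elim/big_rec2: _ => //= i y m _ <-. Qed.

End LinearOperators.

Section PathRepresentation.
Variables (K : fieldType) (E0 : finType) (E1 : eqType) (s r : E1 -> E0).
Variables (w : E0) (w_sink : forall e : E1, s e != w).

(* A path [e1; ...; en] has [r ei = s e(i+1)] and ends at [r en = w]; [[::]]
   is the trivial path at [w]. *)
Definition path_source (p : seq E1) : E0 := if p is e :: _ then s e else w.

Fixpoint is_path (p : seq E1) : bool :=
  if p is e :: p' then (r e == path_source p') && is_path p' else true.

Definition path := {p : seq E1 | is_path p}.
Implicit Types (t : path) (e : E1).
Definition trivial_path : path := exist _ [::] isT.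

Lemma is_path_behead p : is_path p -> is_path (behead p).
Proof. by case: p => //= e p /andP[]. Qed.

Definition path_behead (t : path) : path :=
  exist _ (behead (sval t)) (is_path_behead (valP t)).
Definition path_cons (e : E1) (t : path) : path := insubd t (e :: sval t).

Lemma val_path_cons e t :
  r e == path_source (sval t) -> sval (path_cons e t) = e :: sval t.
Proof. by move=> ret; rewrite insubdK // unfold_in /= ret; apply: valP. Qed.

Lemma path_beheadK e t :
  r e == path_source (sval t) -> path_behead (path_cons e t) = t.
Proof. by move=> ret; apply: val_inj; rewrite /= val_path_cons. Qed.

Lemma path_consK e t :
  ohead (sval t) = Some e -> path_cons e (path_behead t) = t.
Proof.
case: t => [[|e' p] //= pp] [<-]; apply: val_inj => /=.
by rewrite val_path_cons //=; case/andP: pp.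
Qed.

Lemma path_head_source e t : ohead (sval t) = Some e -> path_source (sval t) = s e.
Proof. by case: t => [[|e' p] //= _] [->]. Qed.

Lemma path_head_range e t :
  ohead (sval t) = Some e -> r e = path_source (behead (sval t)).
Proof. by case: t => [[|e' p] //= pp] [<-]; case/andP: pp => /eqP. Qed.

Local Notation L := (@linop K path trivial_path).

(* [edge_op e] and [ghost_op e] precompose with the actions of [e^*] (deleting
   a leading [e]) and of [e] (prepending [e]) on paths; precomposition reverses
   products, which matches the involution [e <-> e^*]. *)

Program Definition vertex_op (u : E0) : L :=
  @LinOp K path trivial_path
    (fun g t => if path_source (sval t) == u then g t else 0) _ _.
Next Obligation. by apply/funext => t; case: ifP; rewrite ?addr0. Qed.
Next Obligation. by apply/funext => t; case: ifP; rewrite ?mulr0. Qed.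

Program Definition edge_op (e : E1) : L :=
  @LinOp K path trivial_path
    (fun g t => if ohead (sval t) == Some e then g (path_behead t) else 0) _ _.
Next Obligation. by apply/funext => t; case: ifP; rewrite ?addr0. Qed.
Next Obligation. by apply/funext => t; case: ifP; rewrite ?mulr0. Qed.

Program Definition ghost_op (e : E1) : L :=
  @LinOp K path trivial_path
    (fun g t => if r e == path_source (sval t) then g (path_cons e t) else 0) _ _.
Next Obligation. by apply/funext => t; case: ifP; rewrite ?addr0. Qed.
Next Obligation. by apply/funext => t; case: ifP; rewrite ?mulr0. Qed.

Lemma vertex_opM u v :
  vertex_op u * vertex_op v = if u == v then vertex_op u else 0.
Proof.
apply: linopP => g t /=; case: (eqVneq u v) => [<-|neq] /=; case: eqP => // ->.
by rewrite (negbTE neq).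
Qed.

Lemma vertex_op_edge e :
  vertex_op (s e) * edge_op e = edge_op e /\ edge_op e * vertex_op (r e) = edge_op e.
Proof.
split; apply: linopP => g t /=; case: (ohead (sval t) =P Some e) => he //.
- by rewrite (path_head_source he) eqxx.
- by case: ifP.
- by rewrite (path_head_range he) eqxx.
Qed.

Lemma vertex_op_ghost e :
  vertex_op (r e) * ghost_op e = ghost_op e /\ ghost_op e * vertex_op (s e) = ghost_op e.
Proof.
split; apply: linopP => g t /=.
  by rewrite eq_sym; case: ifP => // ->.
by case: ifPn => // ret; rewrite val_path_cons //= eqxx.
Qed.

Lemma ghost_op_edge e f :
  ghost_op e * edge_op f = if e == f then vertex_op (r e) else 0.
Proof.
apply: linopP => g t; case: (eqVneq e f) => [<-|neq] /=.
  case: ifPn => ret; last by rewrite eq_sym (negbTE ret).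
  by rewrite val_path_cons //= eqxx path_beheadK // eq_sym ret.
case: ifP => // ret; rewrite val_path_cons //=.
by rewrite (inj_eq (@Some_inj _)) (negbTE neq).
Qed.

Lemma vertex_op_sum_edges (v : E0) (es : seq E1) : uniq es -> es != [::] ->
  (forall e, (s e == v) = (e \in es)) ->
  vertex_op v = \sum_(e <- es) edge_op e * ghost_op e.
Proof.
move=> ues nes ses; apply: linopP => g t; rewrite linop_sumE.
case te: (ohead (sval t)) => [e|]; rewrite [LHS]/=.
  have edge_ghost e' : (edge_op e' * ghost_op e') g t = if e' == e then g t else 0.
    rewrite /= te (inj_eq (@Some_inj _)) eq_sym; case: eqP => // ->.
    by rewrite -(path_head_range te) eqxx path_consK.
  under eq_bigr => e' _ do rewrite edge_ghost.
  rewrite (path_head_source te) ses; case: ifPn => [ein|eout].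
    by rewrite (bigD1_seq e) //= eqxx big1 ?addr0 // => e' /negbTE ->.
  rewrite big1_seq // => e' /andP[_ e'in].
  by case: eqP e'in => // ->; rewrite (negbTE eout).
have v_ne_w : v != w.
  by case: es nes ses ues => // e0 es0 _ /(_ e0); rewrite mem_head => /eqP <-.
have -> : path_source (sval t) = w by case: t te => [[]].
rewrite eq_sym (negbTE v_ne_w) big1 // => e _ /=.
by rewrite te.
Qed.

Lemma sum_vertex_op : \sum_(v : E0) vertex_op v = 1.
Proof.
apply: linopP => g t; rewrite linop_sumE /= (bigD1 (path_source (sval t))) //= eqxx.
by rewrite big1 ?addr0 // => v /negbTE; rewrite eq_sym => ->.
Qed.

Lemma path_leavitt_family : is_leavitt_family s r vertex_op edge_op ghost_op.
Proof.
split; [exact: vertex_opM | | exact: ghost_op_edge | exact: vertex_op_sum_edges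
       | exact: sum_vertex_op].
by move=> e; split; [exact: vertex_op_edge | exact: vertex_op_ghost].
Qed.

Lemma vertex_op_sink_neq0 : vertex_op w != 0.
Proof.
apply/eqP => /(congr1 (fun m : L => m (fun=> 1) trivial_path)) /=.
by rewrite eqxx => /eqP; rewrite oner_eq0.
Qed.

End PathRepresentation.

Lemma alg_hom0 (K : fieldType) (A B : algType K) (phi : A -> B) :
  alg_hom phi -> phi 0 = 0.
Proof. by case=> phiD _ _ _; apply: (@addrI _ (phi 0)); rewrite -phiD !addr0. Qed.

Lemma leavitt_sink_neq0 (K : fieldType) (E0 : finType) (E1 : eqType)
    (s r : E1 -> E0) (A : algType K) (P : E0 -> A) (X Y : E1 -> A) (w : E0) :
  is_leavitt_path_algebra s r P X Y -> (forall e, s e != w) -> P w != 0.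
Proof.
case=> _ univ w_sink.
have [phi [phi_hom phiP _ _ _]] := univ _ _ _ _ (@path_leavitt_family K _ _ s r w w_sink).
apply: contra_neq (vertex_op_sink_neq0 K s r w) => Pw0.
by rewrite -phiP Pw0 (alg_hom0 phi_hom).
Qed.

Section LeavittEdge.
Variables (K : fieldType) (E0 : finType) (E1 : eqType) (s r : E1 -> E0).
Variables (B : algType K) (P : E0 -> B) (X Y : E1 -> B).
Hypothesis family : is_leavitt_family s r P X Y.
Variables (f : E1) (f_not_loop : s f != r f).

Lemma vertex_src_rng : P (s f) * P (r f) = 0.
Proof. by case: family => -> *; rewrite (negbTE f_not_loop). Qed.

Lemma vertex_rng_src : P (r f) * P (s f) = 0.
Proof. by case: family => -> *; rewrite eq_sym (negbTE f_not_loop). Qed.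

Lemma edge_vertex_rng : X f * P (r f) = X f.
Proof. by case: family => _ /(_ f) [[_ ->] _]. Qed.

Lemma ghost_vertex_src : Y f * P (s f) = Y f.
Proof. by case: family => _ /(_ f) [_ [_ ->]]. Qed.

Lemma ghost_edge : Y f * X f = P (r f).
Proof. by case: family => _ _ -> _ _; rewrite eqxx. Qed.

Lemma edge_sqr0 : X f * X f = 0.
Proof.
case: family => _ /(_ f) [[Xsrc _] _] _ _ _.
by rewrite -{1}edge_vertex_rng -{2}Xsrc mulrA -(mulrA (X f)) vertex_rng_src mulr0 mul0r.
Qed.

Lemma ghost_sqr0 : Y f * Y f = 0.
Proof.
case: family => _ /(_ f) [_ [Yrng _]] _ _ _.
by rewrite -{1}ghost_vertex_src -{2}Yrng mulrA -(mulrA (Y f)) vertex_src_rng mulr0 mul0r.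
Qed.

Lemma ghost_vertex_rng : Y f * P (r f) = 0.
Proof. by rewrite -ghost_vertex_src -mulrA vertex_src_rng mulr0. Qed.

End LeavittEdge.

Definition letter_sign (i : bool) : int := if i then -1 else 1.

Definition sanov_letter (l : bool * bool) (v : int * int) : int * int :=
  if l.1 then (v.1 + letter_sign l.2 * 2 * v.2, v.2)
  else (v.1, v.2 + letter_sign l.2 * 2 * v.1).

Fixpoint sanov_word (ws : seq (bool * bool)) (v : int * int) : int * int :=
  if ws is l :: ws' then sanov_letter l (sanov_word ws' v) else v.

Definition dominant (i : bool) (v : int * int) : bool :=
  if i then v.1 * v.1 < v.2 * v.2 else v.2 * v.2 < v.1 * v.1.

(* The region into which the ping-pong argument sends the letter [l]: the
   coordinate changed by [l] dominates, and [v.1 * v.2] has the sign of [l]. *)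
Definition pong_region (l : bool * bool) (v : int * int) : bool :=
  dominant (~~ l.1) v && (0 < letter_sign l.2 * v.1 * v.2).

Lemma sanov_letter_pong l v : dominant l.1 v -> pong_region l (sanov_letter l v).
Proof.
case: l v => [[] []] [x y]; rewrite /pong_region /dominant /sanov_letter /letter_sign /=;
  move=> h; apply/andP; split; nia.
Qed.

Lemma sanov_letter_pong_region l h v : pong_region h v ->
  ~~ ((l.1 == h.1) && (l.2 != h.2)) -> pong_region l (sanov_letter l v).
Proof.
case: l h v => [[] []] [[] []] [x y];
  rewrite /pong_region /dominant /sanov_letter /letter_sign /= => /andP[h1 h2] //= _;
  apply/andP; split; nia.
Qed.

Lemma sanov_word_pong l ws v : reduced_word (l :: ws) ->
  dominant (last l ws).1 v -> pong_region l (sanov_word (l :: ws) v).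
Proof.
elim: ws l => [|l' ws IH] l; first by move=> _; exact: sanov_letter_pong.
case/andP=> not_inverse reduced dom.
exact: sanov_letter_pong_region (IH _ reduced dom) _.
Qed.

Lemma sanov_word_moves ws : ws != [::] -> reduced_word ws ->
  exists v, sanov_word ws v != v.
Proof.
case: ws => // l ws _ reduced.
pose v : int * int := if (last l ws).1 then (0, 1) else (1, 0).
have /(sanov_word_pong reduced) pong : dominant (last l ws).1 v.
  by rewrite /v /dominant; case: (last l ws).1.
exists v; apply: contraTneq pong => ->.
by rewrite /pong_region /v; case: ifP; rewrite !(mulr0, mul0r) andbF.
Qed.

Lemma sqr0_inv (R : pzRingType) (u : R) :
  u * u = 0 -> (1 + u) * (1 - u) = 1 /\ (1 - u) * (1 + u) = 1.
Proof.
move=> uu; split.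
  by rewrite mulrDl mul1r mulrBr mulr1 uu subr0 subrK.
by rewrite mulrBl mul1r mulrDr mulr1 uu addr0 addrK.
Qed.

Lemma sqr0_natr_mul (R : pzRingType) (n : nat) (u : R) :
  u * u = 0 -> (n%:R * u) * (n%:R * u) = 0.
Proof. by move=> uu; rewrite !mulr_natl mulrnAl mulrnAr uu !mul0rn. Qed.

Section SanovRepresentation.
Variables (R : pzRingType) (a b c1 c2 : R).
Hypotheses (bc1 : b * c1 = c2) (bc2 : b * c2 = 0) (ac1 : a * c1 = 0) (ac2 : a * c2 = c1).

Definition sanov_vec (v : int * int) : R := c1 *~ v.1 + c2 *~ v.2.

Lemma sanov_letter_gen (i : bool) (u : R) :
  (if i then 1 - 2%:R * u else 1 + 2%:R * u) = 1 + (letter_sign i * 2)%:~R * u.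
Proof. by case: i; rewrite /= ?mulN1r ?mul1r ?mulNr. Qed.

Lemma mul_sanov_vec_first (k : int) x y :
  (1 + k%:~R * b) * sanov_vec (x, y) = sanov_vec (x, y + k * x).
Proof.
rewrite /sanov_vec /= mulrDl mul1r -mulrA mulrDr !mulrzAr bc1 bc2 mul0rz addr0.
by rewrite mulrzl mulrzDr -addrA mulrC mulrzA.
Qed.

Lemma mul_sanov_vec_second (k : int) x y :
  (1 + k%:~R * a) * sanov_vec (x, y) = sanov_vec (x + k * y, y).
Proof.
rewrite /sanov_vec /= mulrDl mul1r -mulrA mulrDr !mulrzAr ac1 ac2 mul0rz add0r.
by rewrite mulrzl mulrzDr addrAC mulrC mulrzA.
Qed.

Lemma eval_word_sanov_vec ws v :
  eval_word (1 + 2%:R * b) (1 - 2%:R * b) (1 + 2%:R * a) (1 - 2%:R * a) ws * sanov_vec v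
  = sanov_vec (sanov_word ws v).
Proof.
elim: ws => [|[[] i] ws IH] /=; first by rewrite mul1r.
  by rewrite -mulrA IH sanov_letter_gen; case: sanov_word => x y; rewrite mul_sanov_vec_second.
by rewrite -mulrA IH sanov_letter_gen; case: sanov_word => x y; rewrite mul_sanov_vec_first.
Qed.

Hypothesis c2_torsion_free : forall z : int, c2 *~ z = 0 -> z = 0.

Lemma sanov_vec_inj : injective sanov_vec.
Proof.
have sanov_vec0 v : sanov_vec v = 0 -> v = (0, 0).
  case: v => x y; rewrite /sanov_vec /= => v0.
  have x0 : x = 0.
    apply: c2_torsion_free.
    by rewrite -bc1 -mulrzAr -[RHS](mulr0 b) -v0 mulrDr !mulrzAr bc2 mul0rz addr0.
  by move: v0; rewrite x0 mulr0z add0r => /c2_torsion_free ->.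
move=> [x y] [x' y'] eq_v.
have /sanov_vec0 [/eqP + /eqP] : sanov_vec (x - x', y - y') = 0.
  by move: eq_v; rewrite /sanov_vec /= !mulrzBr addrACA -opprD => ->; rewrite subrr.
by rewrite !subr_eq0 => /eqP -> /eqP ->.
Qed.

Hypotheses (aa : a * a = 0) (bb : b * b = 0).

Lemma free_pair_sanov : free_pair (1 + 2%:R * b) (1 + 2%:R * a).
Proof.
exists (1 - 2%:R * b), (1 - 2%:R * a).
split; [exact/sqr0_inv/sqr0_natr_mul | exact/sqr0_inv/sqr0_natr_mul |].
move=> ws ws_nil reduced; have [v] := sanov_word_moves ws_nil reduced.
apply: contraNneq => ws1; apply/eqP/sanov_vec_inj.
by rewrite -eval_word_sanov_vec ws1 mul1r.
Qed.

End SanovRepresentation.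

Lemma pchar0_intr_eq0 (K : fieldType) (z : int) :
  [pchar K] =i pred0 -> (z%:~R == 0 :> K) = (z == 0).
Proof.
move/pcharf0P => natr_eq0; case: z => n; first by rewrite -pmulrn natr_eq0.
by rewrite NegzE mulrNz oppr_eq0 -pmulrn natr_eq0.
Qed.

Lemma pchar0_mulrz_eq0 (K : fieldType) (V : lmodType K) (x : V) (z : int) :
  [pchar K] =i pred0 -> (x *~ z == 0) = (z == 0) || (x == 0).
Proof. by move=> charK0; rewrite -scaler_int scaler_eq0 pchar0_intr_eq0. Qed.

Unset Implicit Arguments.

Theorem lemma4p3 (K : fieldType) (charK0 : [pchar K] =i pred0)
  (E0 : finType) (E1 : eqType) (s r : E1 -> E0)
  (A : algType K) (P : E0 -> A) (X Y : E1 -> A)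
  (HA : is_leavitt_path_algebra s r P X Y)
  (w : E0) (w_sink : forall e : E1, s e != w)
  (f : E1) (hf : r f = w) :
  [/\ is_unit (1 + 2%:R * Y f), is_unit (1 + 2%:R * X f)
    & free_pair (1 + 2%:R * Y f) (1 + 2%:R * X f)].
Proof.
have Pw_neq0 : P w != 0 := leavitt_sink_neq0 HA w_sink.
have family := HA.1.
have f_not_loop : s f != r f by rewrite hf w_sink.
have torsion_free (z : int) : P (r f) *~ z = 0 -> z = 0.
  by move/eqP; rewrite pchar0_mulrz_eq0 // hf (negbTE Pw_neq0) orbF => /eqP.
have free := free_pair_sanov (ghost_edge family f) (ghost_vertex_rng family f_not_loop)
  (edge_sqr0 family f_not_loop) (edge_vertex_rng family f) torsion_free
  (edge_sqr0 family f_not_loop) (ghost_sqr0 family f_not_loop).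
have [xi [yi [x_inv y_inv _]]] := free.
by split => //; [exists xi | exists yi].
Qed.
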